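(* Let $\tau_k>0$ ($1\le k\le N$) be time steps, $t_n=\sum_{k=1}^n\tau_k$, $r_k=\tau_k/\tau_{k-1}$ for $2\le k\le N$, $r_1:=0$, with $0<r_k<1+\sqrt2$ for $2\le k\le N$. Define $b_0^{(1)}=1/\tau_1$, $b_1^{(1)}=0$ and for $n\ge2$ $b_0^{(n)}=\frac{1+2r_n}{\tau_n(1+r_n)}$, $b_1^{(n)}=-\frac{r_n^2}{\tau_n(1+r_n)}$. Let $\eta$ satisfy $\frac{r_k^2}{1+2r_k}\le\eta<1$ for all $2\le k\le N$, and define $d_0^{(n)}=b_0^{(n)}$, $d_j^{(n)}=\eta^{j-1}(b_0^{(n)}\eta+b_1^{(n)})$ for $1\le j\le n$. Let $\kappa>0$, $\lambda\in(0,1)$, and let $\{g^k\}_{k=1}^N$, $\{w^k\}_{k=0}^N$ be nonnegative sequences with $$\sum_{k=1}^n d_{n-k}^{(n)}(w^k-w^{k-1})\le\kappa\sum_{k=1}^n\lambda^{n-k}w^k+g^n\qquad\text{for }1\le n\le N.$$ If $b_0^{(n)}\ge2\kappa$ (for all $1\le n\le N$), then $$w^n\le2\exp\Big(\frac{2\kappa t_n}{1-\lambda}\Big)\Big(w^0+\sum_{j=1}^n\frac{g^j}{b_0^{(j)}}\Big)\qquad\text{for }1\le n\le N.$$ *)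

From mathcomp Require Import all_boot all_order all_algebra.
From mathcomp Require Import all_classical all_reals all_analysis.
Set Implicit Arguments. Unset Strict Implicit. Unset Printing Implicit Defensive.
Import Order.TTheory GRing.Theory Num.Theory.
Local Open Scope ring_scope.

Section Defs.
Context {R : realType}.

Definition tpt (tau : nat -> R) (n : nat) : R := \sum_(1 <= k < n.+1) tau k.

Definition tstep_ratio (tau : nat -> R) (k : nat) : R :=
  if (k <= 1)%N then 0 else tau k / tau k.-1.

Definition b0 (tau : nat -> R) (n : nat) : R :=
  if (n <= 1)%N then 1 / tau 1
  else (1 + 2 * tstep_ratio tau n) / (tau n * (1 + tstep_ratio tau n)).

Definition b1 (tau : nat -> R) (n : nat) : R :=
  if (n <= 1)%N then 0
  else - (tstep_ratio tau n ^+ 2) / (tau n * (1 + tstep_ratio tau n)).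

Definition dk (eta : R) (tau : nat -> R) (n j : nat) : R :=
  if j == 0%N then b0 tau n
  else eta ^+ j.-1 * (b0 tau n * eta + b1 tau n).
End Defs.

From mathcomp Require Import all_boot all_order all_algebra.
From mathcomp Require Import all_classical all_reals all_analysis.
From mathcomp Require Import ring lra.
Import Order.TTheory GRing.Theory Num.Theory.
Set Implicit Arguments.
Unset Strict Implicit.
Unset Printing Implicit Defensive.

Local Open Scope ring_scope.

(* The DOC kernels satisfy d_(j+1) = eta^j d_1, so the left-hand side at step n is
   b0 (w^n - w^(n-1)) + d_1 sum_k eta^(n-1-k) (w^k - w^(k-1)), with 0 <= d_1 <= b0 by the
   bounds on eta.  If M bounds w^0, ..., w^(n-1), the geometric sum is at least w^(n-1) - M,
   so the left-hand side is at least b0 (w^n - M), while the right-hand side is at most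
   kappa (w^n + lambda M / (1 - lambda)) + g^n.  Solving for w^n with b0 >= 2 kappa and
   b0 tau_n >= 1 gives w^n <= exp(2 kappa tau_n / (1 - lambda)) M + 2 g^n / b0, and an
   induction on the running maximum of w yields
   w^n <= exp(2 kappa t_n / (1 - lambda)) (w^0 + 2 sum_j g^j / b0^(j)). *)

Lemma le_nondecr_majorant (R : numDomainType) (w F : nat -> R) (N : nat) :
  w 0%N <= F 0%N ->
  (forall m, (m < N)%N -> F m <= F m.+1) ->
  (forall m, (m < N)%N -> (forall k, (k <= m)%N -> w k <= F m) -> w m.+1 <= F m.+1) ->
  forall n, (n <= N)%N -> w n <= F n.
Proof.
move=> w0 F_nondecr F_step.
suff all_le n : (n <= N)%N -> forall k, (k <= n)%N -> w k <= F n.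
  by move=> n nN; exact: all_le.
elim: n => [_ k|m IH mN k]; first by rewrite leqn0 => /eqP->.
rewrite leq_eqVlt => /predU1P[->|km]; first exact/F_step/IH/ltnW.
exact: le_trans (IH (ltnW mN) k km) (F_nondecr m mN).
Qed.

Section GeometricConvolution.
Variable R : realFieldType.

Definition geom_conv (q : R) (u : nat -> R) (m : nat) : R :=
  \sum_(1 <= k < m.+1) q ^+ (m - k) * u k.

Lemma geom_conv0 q u : geom_conv q u 0 = 0.
Proof. by rewrite /geom_conv big_geq. Qed.

Lemma geom_convS q u m : geom_conv q u m.+1 = u m.+1 + q * geom_conv q u m.
Proof.
rewrite /geom_conv big_nat_recr //= subnn expr0 mul1r addrC big_distrr.
congr (_ + _); apply: eq_big_nat => k /andP[_ km].
by rewrite subSn // exprS -mulrA.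
Qed.

Lemma geom_conv_le q w M m : 0 <= q < 1 -> 0 <= M ->
  (forall k, (1 <= k <= m)%N -> w k <= M) -> geom_conv q w m <= M / (1 - q).
Proof.
move=> /andP[q0 q1] M0; elim: m => [|m IH] wM.
  by rewrite geom_conv0 divr_ge0 // subr_ge0 ltW.
have {}IH : geom_conv q w m <= M / (1 - q).
  by apply: IH => k /andP[k1 km]; rewrite wM // k1 leqW.
have wmM : w m.+1 <= M by apply: wM; rewrite leqnn.
have -> : M / (1 - q) = M + q * (M / (1 - q)) by field; lra.
by rewrite geom_convS lerD // ler_wpM2l.
Qed.

Lemma geom_conv_diff_ge q w M m : 0 <= q <= 1 ->
  (forall k, (k <= m)%N -> w k <= M) ->
  w m - M <= geom_conv q (fun k => w k - w k.-1) m.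
Proof.
move=> /andP[q0 q1]; elim: m => [|m IH] wM.
  by rewrite geom_conv0 subr_le0 wM.
have {}IH := IH (fun k km => wM k (leqW km)).
have wmM : w m <= M := wM m (leqnSn m).
have gap : 0 <= (1 - q) * (M - w m) by apply: mulr_ge0; lra.
have : q * (w m - M) <= q * geom_conv q (fun k => w k - w k.-1) m.
  exact: ler_wpM2l.
rewrite geom_convS /=; lra.
Qed.

Lemma doc_sum_ge (c0 c1 q M : R) w m : 0 <= c1 <= c0 -> 0 <= q <= 1 ->
  (forall k, (k <= m)%N -> w k <= M) ->
  c0 * (w m.+1 - M)
    <= c0 * (w m.+1 - w m) + c1 * geom_conv q (fun k => w k - w k.-1) m.
Proof.
move=> /andP[c10 c1c0] q01 wM.
have wmM : w m <= M := wM m (leqnn m).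
have : c1 * (w m - M) <= c1 * geom_conv q (fun k => w k - w k.-1) m.
  by rewrite ler_wpM2l // geom_conv_diff_ge.
have : 0 <= (c0 - c1) * (M - w m) by apply: mulr_ge0; lra.
lra.
Qed.

Lemma implicit_step_le (b k l M g w : R) :
  0 < k -> 2 * k <= b -> 0 <= l < 1 -> 0 <= M -> 0 <= g ->
  b * (w - M) <= k * (w + l * (M / (1 - l))) + g ->
  w <= (1 + 2 * k / (b * (1 - l))) * M + 2 * (g / b).
Proof.
move=> k0 kb /andP[l0 l1] M0 g0 step.
(* With x = k / b <= 1/2, the factor (1 + x l / (1 - l)) / (1 - x) in front of M is at
   most 1 + 2 x / (1 - l), and 1 / (1 - x) <= 2. *)
have bk : 0 < b - k by lra.
have coef : b + k * l / (1 - l) <= (b - k) * (1 + 2 * k / (b * (1 - l))).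
  rewrite -subr_ge0.
  have -> : (b - k) * (1 + 2 * k / (b * (1 - l))) - (b + k * l / (1 - l))
            = k * (b - 2 * k) / (b * (1 - l)) by field; lra.
  by apply: divr_ge0; apply: mulr_ge0; lra.
have gM : g <= (b - k) * (2 * (g / b)).
  have -> : (b - k) * (2 * (g / b)) = g + (b - 2 * k) * g / b by field; lra.
  by rewrite lerDl divr_ge0 // ?mulr_ge0; lra.
have cM := ler_wpM2r M0 coef.
rewrite -(ler_pM2l bk).
lra.
Qed.

End GeometricConvolution.

Section BDF2Coefficients.
Variables (R : realType) (tau : nat -> R) (eta : R).

Lemma tptS m : tpt tau m.+1 = tpt tau m + tau m.+1.
Proof. by rewrite /tpt big_nat_recr. Qed.

Lemma tpt_ge0 n : (forall k, (1 <= k <= n)%N -> 0 <= tau k) -> 0 <= tpt tau n.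
Proof.
move=> tau_ge0; rewrite /tpt big_nat_cond sumr_ge0 // => k /andP[kn _].
by rewrite tau_ge0 // -ltnS.
Qed.

Lemma b0_mul_tau_ge1 n : (0 < n)%N -> 0 < tau n -> 0 <= tstep_ratio tau n ->
  1 <= b0 tau n * tau n.
Proof.
move=> n0 tau0; rewrite /b0; case: ifP => [n1 _|_].
  move: tau0; have -> : n = 1%N by apply/eqP; rewrite eqn_leq n1.
  by move=> tau1; rewrite divfK ?gt_eqF.
set r := tstep_ratio tau n => r0.
have -> : (1 + 2 * r) / (tau n * (1 + r)) * tau n = (1 + 2 * r) / (1 + r).
  by field; lra.
by rewrite ler_pdivlMr ?mul1r; lra.
Qed.

Lemma dkSE n j : dk eta tau n j.+1 = eta ^+ j * dk eta tau n 1.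
Proof. by rewrite /dk /= expr0 mul1r. Qed.

Lemma dk1E n : (1 < n)%N ->
  dk eta tau n 1 = (eta * (1 + 2 * tstep_ratio tau n) - tstep_ratio tau n ^+ 2)
                   / (tau n * (1 + tstep_ratio tau n)).
Proof.
move=> n1; rewrite /dk /b0 /b1 /= leqNgt n1 /= expr0 mul1r; ring.
Qed.

Lemma dk1_ge0 n : (1 < n)%N -> 0 < tau n -> 0 <= tstep_ratio tau n ->
  tstep_ratio tau n ^+ 2 / (1 + 2 * tstep_ratio tau n) <= eta -> 0 <= dk eta tau n 1.
Proof.
move=> n1 tau0 r0 eta_lb; rewrite dk1E //.
have : tstep_ratio tau n ^+ 2 <= eta * (1 + 2 * tstep_ratio tau n).
  by rewrite -ler_pdivrMr //; lra.
by move=> ?; apply: divr_ge0; [lra | apply: mulr_ge0; lra].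
Qed.

Lemma dk1_le_dk0 n : (1 < n)%N -> 0 < tau n -> 0 <= tstep_ratio tau n ->
  eta <= 1 -> dk eta tau n 1 <= dk eta tau n 0.
Proof.
move=> n1 tau0 r0 eta1; rewrite dk1E // [dk _ _ _ 0]/dk /b0 leqNgt n1 /=.
rewrite ler_pM2r ?invr_gt0 ?mulr_gt0; try lra.
by have := sqr_ge0 (tstep_ratio tau n); nra.
Qed.

Lemma sum_dk_split (w : nat -> R) m :
  \sum_(1 <= k < m.+2) dk eta tau m.+1 (m.+1 - k) * (w k - w k.-1)
  = dk eta tau m.+1 0 * (w m.+1 - w m)
    + dk eta tau m.+1 1 * geom_conv eta (fun k => w k - w k.-1) m.
Proof.
rewrite big_nat_recr //= subnn addrC /geom_conv big_distrr; congr (_ + _).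
apply: eq_big_nat => k /andP[_ km]; rewrite subSn // dkSE /=; ring.
Qed.

End BDF2Coefficients.

Section DOCGronwall.
Variables (R : realType) (N : nat) (tau : nat -> R) (eta kappa lambda : R).
Variables (g w : nat -> R).
Hypotheses (tau_gt0 : forall k, (1 <= k <= N)%N -> 0 < tau k)
  (ratio_gt0 : forall k, (2 <= k <= N)%N -> 0 < tstep_ratio tau k)
  (eta_lb : forall k, (2 <= k <= N)%N ->
     tstep_ratio tau k ^+ 2 / (1 + 2 * tstep_ratio tau k) <= eta)
  (eta_lt1 : eta < 1) (kappa_gt0 : 0 < kappa)
  (lambda_ge0 : 0 <= lambda) (lambda_lt1 : lambda < 1)
  (g_ge0 : forall k, (1 <= k <= N)%N -> 0 <= g k) (w0_ge0 : 0 <= w 0%N)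
  (doc_ineq : forall n, (1 <= n <= N)%N ->
     \sum_(1 <= k < n.+1) dk eta tau n (n - k) * (w k - w k.-1)
       <= kappa * geom_conv lambda w n + g n)
  (b0_ge : forall n, (1 <= n <= N)%N -> 2 * kappa <= b0 tau n).

Lemma b0_gt0 n : (1 <= n <= N)%N -> 0 < b0 tau n.
Proof. by move=> nN; have := b0_ge nN; have := kappa_gt0; lra. Qed.

Lemma g_div_b0_ge0 n : (1 <= n <= N)%N -> 0 <= g n / b0 tau n.
Proof. by move=> nN; rewrite divr_ge0 ?g_ge0 // ltW // b0_gt0. Qed.

Lemma ratio_ge0 n : (1 <= n <= N)%N -> 0 <= tstep_ratio tau n.
Proof.
case/andP=> _ nN; case: (leqP n 1) => [n1|n1]; first by rewrite /tstep_ratio n1.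
by apply: ltW; apply: ratio_gt0; rewrite n1.
Qed.

Lemma growth_coef_le n : (1 <= n <= N)%N ->
  1 + 2 * kappa / (b0 tau n * (1 - lambda)) <= expR (2 * kappa * tau n / (1 - lambda)).
Proof.
move=> nN; apply: le_trans (expR_ge1Dx _); rewrite lerD2l.
have b_tau : (b0 tau n)^-1 <= tau n.
  rewrite -div1r ler_pdivrMr ?b0_gt0 // mulrC.
  by apply: b0_mul_tau_ge1; [case/andP: nN | apply: tau_gt0 | apply: ratio_ge0].
rewrite invfM !mulrA -!(mulrAC _ (1 - lambda)^-1) ler_wpM2l //.
by rewrite mulr_ge0 ?divr_ge0 ?subr_ge0 // ltW.
Qed.

Lemma doc_lhs_ge m M : (m < N)%N -> (forall k, (k <= m)%N -> w k <= M) ->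
  b0 tau m.+1 * (w m.+1 - M)
    <= \sum_(1 <= k < m.+2) dk eta tau m.+1 (m.+1 - k) * (w k - w k.-1).
Proof.
move=> mN wM; rewrite sum_dk_split.
have b0m : 0 < b0 tau m.+1 by rewrite b0_gt0 ?mN.
(* [eta_lb] says nothing at the first step, where the convolution is empty. *)
case: m => [|m] in mN wM b0m *.
  by rewrite geom_conv0 mulr0 addr0 ler_pM2l // lerD2l lerN2 wM.
have m2 : (1 < m.+2 <= N)%N by rewrite mN.
have tau_m : 0 < tau m.+2 by rewrite tau_gt0 ?mN.
have r_m : 0 <= tstep_ratio tau m.+2 by apply: ltW; apply: ratio_gt0.
have eta0 : 0 <= eta.
  apply: le_trans (eta_lb m2); apply: divr_ge0; first exact: sqr_ge0.
  by have := r_m; lra.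
apply: doc_sum_ge wM; last by rewrite eta0 ltW.
by rewrite dk1_ge0 ?dk1_le_dk0 ?eta_lb // ltW.
Qed.

Lemma w_succ_le m M : (m < N)%N -> 0 <= M -> (forall k, (k <= m)%N -> w k <= M) ->
  w m.+1 <= expR (2 * kappa * tau m.+1 / (1 - lambda)) * M + 2 * (g m.+1 / b0 tau m.+1).
Proof.
move=> mN M0 wM; have m1N : (1 <= m.+1 <= N)%N by rewrite mN.
have rhs_le : kappa * geom_conv lambda w m.+1 + g m.+1
              <= kappa * (w m.+1 + lambda * (M / (1 - lambda))) + g m.+1.
  rewrite lerD2r ler_pM2l // geom_convS lerD2l; apply: ler_wpM2l => //.
  by apply: geom_conv_le => [|//|k /andP[_ km]]; [rewrite lambda_ge0 | apply: wM].
have step : b0 tau m.+1 * (w m.+1 - M)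
            <= kappa * (w m.+1 + lambda * (M / (1 - lambda))) + g m.+1.
  exact: le_trans (doc_lhs_ge mN wM) (le_trans (doc_ineq m1N) rhs_le).
have lambda01 : 0 <= lambda < 1 by rewrite lambda_ge0.
apply: le_trans (implicit_step_le kappa_gt0 (b0_ge m1N) lambda01 M0 (g_ge0 m1N) step) _.
by rewrite lerD2r ler_wpM2r // growth_coef_le.
Qed.

Let growth n := expR (2 * kappa * tpt tau n / (1 - lambda)).

Let majorant n := growth n * (w 0%N + 2 * \sum_(1 <= j < n.+1) g j / b0 tau j).

Lemma expR_rate_ge1 x : 0 <= x -> 1 <= expR (2 * kappa * x / (1 - lambda)).
Proof.
move=> x0; rewrite -[leLHS]expR0 ler_expR.
apply: divr_ge0; last by rewrite subr_ge0 ltW.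
by rewrite pmulr_rge0 // pmulr_rgt0.
Qed.

Lemma growth_ge1 n : (n <= N)%N -> 1 <= growth n.
Proof.
move=> nN; apply/expR_rate_ge1/tpt_ge0 => k /andP[k1 kn].
by rewrite ltW // tau_gt0 // k1 (leq_trans kn).
Qed.

Lemma majorant_ge0 n : (n <= N)%N -> 0 <= majorant n.
Proof.
move=> nN; apply: mulr_ge0; first exact/ltW/expR_gt0.
apply: addr_ge0 => //; apply: mulr_ge0 => //.
rewrite big_nat_cond sumr_ge0 // => j /andP[/andP[j1 jn] _].
by rewrite g_div_b0_ge0 // j1 -ltnS (leq_trans jn).
Qed.

Lemma majorantS m : majorant m.+1
  = expR (2 * kappa * tau m.+1 / (1 - lambda)) * majorant m
    + growth m.+1 * (2 * (g m.+1 / b0 tau m.+1)).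
Proof.
rewrite /majorant /growth big_nat_recr //= tptS.
have -> : 2 * kappa * (tpt tau m + tau m.+1) / (1 - lambda)
          = 2 * kappa * tpt tau m / (1 - lambda) + 2 * kappa * tau m.+1 / (1 - lambda).
  by ring.
by rewrite expRD; ring.
Qed.

Lemma majorant_nondecr m : (m < N)%N -> majorant m <= majorant m.+1.
Proof.
move=> mN; have m1N : (1 <= m.+1 <= N)%N by rewrite mN.
have tau_m : 0 <= tau m.+1 by rewrite ltW // tau_gt0.
rewrite majorantS -[leLHS]addr0 lerD //.
  by rewrite ler_peMl ?majorant_ge0 ?expR_rate_ge1 // ltnW.
apply: mulr_ge0; first exact: le_trans ler01 (growth_ge1 mN).
by apply: mulr_ge0; last exact: g_div_b0_ge0.
Qed.

Lemma majorant_step m : (m < N)%N ->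
  (forall k, (k <= m)%N -> w k <= majorant m) -> w m.+1 <= majorant m.+1.
Proof.
move=> mN wM; have m1N : (1 <= m.+1 <= N)%N by rewrite mN.
apply: le_trans (w_succ_le mN (majorant_ge0 (ltnW mN)) wM) _.
rewrite majorantS lerD2l ler_peMl ?growth_ge1 //.
by apply: mulr_ge0; last exact: g_div_b0_ge0.
Qed.

Lemma w_le_majorant n : (n <= N)%N -> w n <= majorant n.
Proof.
apply: le_nondecr_majorant; last exact: majorant_step; last exact: majorant_nondecr.
by rewrite /majorant /growth /tpt !big_geq // !mulr0 mul0r expR0 mul1r addr0.
Qed.

End DOCGronwall.

Theorem lemma5p1 (R : realType) (N : nat) (tau : nat -> R) (eta kappa lambda : R)
  (g w : nat -> R)
  (Htau : forall k, (1 <= k <= N)%N -> 0 < tau k)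
  (Hr : forall k, (2 <= k <= N)%N -> 0 < tstep_ratio tau k /\ tstep_ratio tau k < 1 + Num.sqrt 2)
  (Heta_lb : forall k, (2 <= k <= N)%N ->
     tstep_ratio tau k ^+ 2 / (1 + 2 * tstep_ratio tau k) <= eta)
  (Heta_ub : eta < 1)
  (Hkappa : 0 < kappa) (Hlambda : 0 < lambda < 1)
  (Hg : forall k, (1 <= k <= N)%N -> 0 <= g k)
  (Hw : forall k, (k <= N)%N -> 0 <= w k)
  (Hineq : forall n, (1 <= n <= N)%N ->
     \sum_(1 <= k < n.+1) dk eta tau n (n - k) * (w k - w k.-1)
       <= kappa * \sum_(1 <= k < n.+1) lambda ^+ (n - k) * w k + g n)
  (Hb0 : forall n, (1 <= n <= N)%N -> 2 * kappa <= b0 tau n) :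
  forall n, (1 <= n <= N)%N ->
    w n <= 2 * expR (2 * kappa * tpt tau n / (1 - lambda))
             * (w 0%N + \sum_(1 <= j < n.+1) g j / b0 tau j).
Proof.
move=> n /andP[_ nN]; have /andP[lambda0 lambda1] := Hlambda.
have ratio_gt0 k (kN : (2 <= k <= N)%N) := (Hr k kN).1.
have := w_le_majorant Htau ratio_gt0 Heta_lb Heta_ub Hkappa (ltW lambda0) lambda1
  Hg (Hw 0%N (leq0n N)) Hineq Hb0 nN.
move/le_trans; apply.
set e := expR _; set S := \sum_(_ <= _ < _) _.
have : 0 <= e * w 0%N by rewrite mulr_ge0 ?Hw // ltW // expR_gt0.
lra.
Qed.
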